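(* Consider an MDP with finite action set $\mathcal{A}$ partitioned into disjoint clusters $\{\mathcal{A}_c\}_{c\in\mathcal{C}}$, fix a state $s$, let $Q^\star$ be the optimal action-value function, $a^\star\in\arg\max_{a\in\mathcal{A}}Q^\star(s,a)$, and $c^\star$ the cluster containing $a^\star$. Let $\pi$ be a hierarchical policy $\pi(a\mid s)=\pi_{\mathrm{high}}(c\mid s)\,\pi_{\mathrm{low}}(a\mid s,c)$ for $a\in\mathcal{A}_c$, where $\pi_{\mathrm{low}}(\cdot\mid s,c)$ is supported on $\mathcal{A}_c$. Suppose the high-level policy selects a sub-optimal cluster $c\ne c^\star$ with probability $\epsilon_h=\pi_{\mathrm{high}}(c\mid s)$. Then the value regret $R=V^\star(s)-V^\pi(s)$ satisfies $$R\ge\epsilon_h\Big(Q^\star(s,a^\star)-\max_{a\in\mathcal{A}_c}Q^\star(s,a)\Big).$$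
   Context: $V^\star(s)=\max_a Q^\star(s,a)$ is the optimal value and $V^\pi(s)$ is the (discounted) value of policy $\pi$ at state $s$. *)

From mathcomp Require Import all_boot all_order all_algebra.
Set Implicit Arguments. Unset Strict Implicit. Unset Printing Implicit Defensive.
Import Order.TTheory GRing.Theory Num.Theory.
Local Open Scope ring_scope.

Section MDP.
Variables (R : realFieldType) (S A C : finType).

Definition is_distr (T : finType) (p : T -> R) : Prop :=
  (forall x, 0 <= p x) /\ \sum_x p x = 1.

Definition is_max_on (P : pred A) (f : A -> R) (m : R) : Prop :=
  (exists2 a, P a & m = f a) /\ (forall a, P a -> f a <= m).

Definition is_transition (Tr : S -> A -> S -> R) : Prop :=
  forall s a, is_distr (Tr s a).

(* Q* is the optimal action-value function and Vs = V* (s) = max_a Q*(s,a):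
   the (unique, for 0 <= gamma < 1) solution of the Bellman optimality equation *)
Definition is_optimal_Q (r : S -> A -> R) (Tr : S -> A -> S -> R) (gamma : R)
    (Q : S -> A -> R) (Vs : S -> R) : Prop :=
  (forall s, is_max_on predT (Q s) (Vs s)) /\
  (forall s a, Q s a = r s a + gamma * \sum_s' Tr s a s' * Vs s').

(* V is the discounted value of the stochastic policy pi (pi s a = pi(a|s)):
   the (unique, for 0 <= gamma < 1) solution of the policy Bellman equation *)
Definition is_policy_value (r : S -> A -> R) (Tr : S -> A -> S -> R) (gamma : R)
    (pi : S -> A -> R) (V : S -> R) : Prop :=
  forall s, V s = \sum_a pi s a * (r s a + gamma * \sum_s' Tr s a s' * V s').

(* cl a = the cluster c with a \in A_c (so the clusters partition A).
   Hierarchical policy: pi(a|s) = pi_high(c|s) pi_low(a|s,c) for a \in A_c. *)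
Definition hier_policy (cl : A -> C) (ph : S -> C -> R) (pl : S -> C -> A -> R)
    : S -> A -> R := fun s a => ph s (cl a) * pl s (cl a) a.

Definition is_hier (cl : A -> C) (ph : S -> C -> R) (pl : S -> C -> A -> R)
    : Prop :=
  (forall s, is_distr (ph s)) /\
  (forall s c, is_distr (pl s c)) /\
  (forall s c a, cl a != c -> pl s c a = 0).

End MDP.

(** The regret g := V* - V^pi satisfies the Bellman-type equation
    g(s) = sum_a pi(a|s) (V*(s) - Q*(s,a)) + gamma E_{a ~ pi, s' ~ T}[g(s')],
    whose source term (the expected one-step gap) is nonnegative; at a
    minimiser of g this forces (1 - gamma) min g >= 0, so g >= 0 everywhere.
    Dropping the discounted term, the regret at s is at least the one-step gap,
    and restricting that sum to the cluster c, where every gap is at least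
    Q*(s,a_star) - max_{a in A_c} Q*(s,a), leaves pi_high(c|s) times this
    difference. *)
From mathcomp Require Import all_boot all_order all_algebra.
From mathcomp Require Import ring.
Set Implicit Arguments. Unset Strict Implicit. Unset Printing Implicit Defensive.
Import Order.TTheory GRing.Theory Num.Theory.
Local Open Scope ring_scope.

Section Distributions.
Variable R : realFieldType.

Lemma is_distr_mix (I T : finType) (p : I -> R) (k : I -> T -> R) :
  is_distr p -> (forall i, is_distr (k i)) ->
  is_distr (fun t => \sum_i p i * k i t).
Proof.
move=> [p_ge0 p_sum1] k_distr; split=> [t|].
  by apply: sumr_ge0 => i _; rewrite mulr_ge0 //; case: (k_distr i).
rewrite exchange_big /= -p_sum1; apply: eq_bigr => i _.
by rewrite -mulr_sumr (proj2 (k_distr i)) mulr1.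
Qed.

Lemma gap_sum_ge_restricted (A : finType) (P : pred A) (p q : A -> R)
    (v m : R) :
  (forall a, 0 <= p a) -> (forall a, q a <= v) -> (forall a, P a -> q a <= m) ->
  (\sum_(a | P a) p a) * (v - m) <= \sum_a p a * (v - q a).
Proof.
move=> p_ge0 q_le_v q_le_m; rewrite mulr_suml [leRHS](bigID P) /=.
apply: ler_wpDr.
  by apply: sumr_ge0 => a _; rewrite mulr_ge0 // subr_ge0.
by apply: ler_sum => a Pa; rewrite ler_wpM2l // lerB // q_le_m.
Qed.

Lemma bellman_fixpoint_ge0 (S : finType) (P : S -> S -> R) (b g : S -> R)
    (gamma : R) :
  0 <= gamma -> gamma < 1 -> (forall s, is_distr (P s)) ->
  (forall s, 0 <= b s) ->
  (forall s, g s = b s + gamma * \sum_s' P s s' * g s') ->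
  forall s, 0 <= g s.
Proof.
move=> gamma_ge0 gamma_lt1 P_distr b_ge0 g_eq s.
pose s0 := Order.arg_min s xpredT g.
have g_min x : g s0 <= g x by rewrite /s0; case: arg_minP => // i _; apply.
have one_sub_gamma_gt0 : 0 < 1 - gamma by rewrite subr_gt0.
apply: le_trans (g_min s); rewrite -(pmulr_rge0 _ one_sub_gamma_gt0).
rewrite mulrBl mul1r subr_ge0 [leRHS]g_eq ler_wpDl // ler_wpM2l //.
rewrite -[leLHS]mul1r -(proj2 (P_distr s0)) mulr_suml.
by apply: ler_sum => x _; rewrite ler_wpM2l // (proj1 (P_distr s0)).
Qed.

End Distributions.

Section HierarchicalPolicy.
Variables (R : realFieldType) (S A C : finType) (cl : A -> C).
Variables (ph : S -> C -> R) (pl : S -> C -> A -> R).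
Hypothesis pl_supp : forall s c a, cl a != c -> pl s c a = 0.

Lemma hier_policyE s a :
  hier_policy cl ph pl s a = \sum_c ph s c * pl s c a.
Proof.
rewrite (bigD1 (cl a)) //= big1 ?addr0 // => c c_neq.
by rewrite pl_supp ?mulr0 // eq_sym.
Qed.

Lemma is_distr_hier_policy s :
  is_distr (ph s) -> (forall c, is_distr (pl s c)) ->
  is_distr (hier_policy cl ph pl s).
Proof.
move=> ph_distr pl_distr.
have [mix_ge0 mix_sum1] := is_distr_mix ph_distr pl_distr.
split=> [a|]; first by rewrite hier_policyE.
by under eq_bigr do rewrite hier_policyE.
Qed.

Lemma sum_hier_policy_cluster s c :
  is_distr (pl s c) -> \sum_(a | cl a == c) hier_policy cl ph pl s a = ph s c.
Proof.
move=> [_ pl_sum1].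
rewrite (eq_bigr (fun a => ph s c * pl s c a)); last by move=> a /eqP <-.
rewrite -mulr_sumr -[RHS]mulr1 -pl_sum1; congr (_ * _).
rewrite [RHS](bigID [pred a | cl a == c]) /=.
by rewrite [X in _ + X]big1 ?addr0 // => a /pl_supp.
Qed.

End HierarchicalPolicy.

Section Regret.
Variables (R : realFieldType) (S A : finType).
Variables (r : S -> A -> R) (Tr : S -> A -> S -> R) (gamma : R).
Variables (Q : S -> A -> R) (V : S -> R) (pi : S -> A -> R) (Vpi : S -> R).
Hypothesis Q_lookahead :
  forall s a, Q s a = r s a + gamma * \sum_s' Tr s a s' * V s'.
Hypothesis Vpi_value : is_policy_value r Tr gamma pi Vpi.
Hypothesis pi_sum1 : forall s, \sum_a pi s a = 1.

Lemma value_gap_bellman s :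
  V s - Vpi s = \sum_a pi s a * (V s - Q s a)
    + gamma * \sum_s' (\sum_a pi s a * Tr s a s') * (V s' - Vpi s').
Proof.
under [X in _ = _ + gamma * X]eq_bigr do rewrite mulr_suml.
rewrite exchange_big /= [in LHS]Vpi_value -[in LHS](mul1r (V s)) -(pi_sum1 s).
rewrite mulr_suml -sumrB mulr_sumr -big_split /=; apply: eq_bigr => a _.
under [X in _ = _ + gamma * X]eq_bigr do rewrite -mulrA mulrBr.
by rewrite -mulr_sumr sumrB Q_lookahead; ring.
Qed.

End Regret.

Theorem propositionB1 (R : realFieldType) (S A C : finType)
  (cl : A -> C) (r : S -> A -> R) (Tr : S -> A -> S -> R) (gamma : R)
  (hgamma0 : 0 <= gamma) (hgamma1 : gamma < 1)
  (hTr : is_transition Tr)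
  (Qstar : S -> A -> R) (Vstar : S -> R)
  (hQ : is_optimal_Q r Tr gamma Qstar Vstar)
  (ph : S -> C -> R) (pl : S -> C -> A -> R)
  (hpi : is_hier cl ph pl)
  (Vpi : S -> R)
  (hV : is_policy_value r Tr gamma (hier_policy cl ph pl) Vpi)
  (s : S) (astar : A)
  (hastar : forall a, Qstar s a <= Qstar s astar)
  (c : C) (hc : c != cl astar)
  (m : R) (hm : is_max_on [pred a | cl a == c] (Qstar s) m) :
  ph s c * (Qstar s astar - m) <= Vstar s - Vpi s.
Proof.
case: hQ => V_max Q_lookahead; case: hpi => ph_distr [pl_distr pl_supp].
set pi := hier_policy cl ph pl.
have pi_distr s' : is_distr (pi s') by exact: is_distr_hier_policy.
have pi_sum1 s' : \sum_a pi s' a = 1 by case: (pi_distr s').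
have Q_le_V s' a : Qstar s' a <= Vstar s' by apply: (proj2 (V_max s')).
have gap_ge0 s' : 0 <= \sum_a pi s' a * (Vstar s' - Qstar s' a).
  by apply: sumr_ge0 => a _; rewrite mulr_ge0 ?subr_ge0 //; case: (pi_distr s').
have step_distr s' : is_distr (fun s'' => \sum_a pi s' a * Tr s' a s'').
  exact: is_distr_mix.
have regret_eq := value_gap_bellman Q_lookahead hV pi_sum1.
have regret_ge0 := bellman_fixpoint_ge0 hgamma0 hgamma1 step_distr gap_ge0
  regret_eq.
have -> : Qstar s astar = Vstar s.
  by apply/eqP; rewrite eq_le Q_le_V /=; have [[a _ ->] _] := V_max s.
rewrite regret_eq ler_wpDr //.
  rewrite mulr_ge0 // sumr_ge0 // => s' _.
  by rewrite mulr_ge0 // (proj1 (step_distr s)).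
rewrite -(sum_hier_policy_cluster ph pl_supp (pl_distr s c)).
by apply: gap_sum_ge_restricted => // a; [case: (pi_distr s) | apply: hm.2].
Qed.
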